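(* Let $0<\lambda<1$, let $c>0$, and let $A \subseteq \mathbb{N}$. Suppose that $$\sum_{a \in A[x]} w(a) \sim \exp(c x^{1-\lambda}).$$ Then $$\limsup_{x \to \infty} \frac{\pi_A(x + x^\lambda) - \pi_A(x)}{x^\lambda/\log(x)} \le \frac{\exp[c(1-\lambda)] - 1}{c(1-\lambda)}.$$
   Context: Fix $0<\lambda<1$. For $c>0$ and $x>0$, define $w(x) = \frac{c(1-\lambda)\log(x)\exp(c x^{1-\lambda})}{x^\lambda}$. Here $\mathbb{N} = \{1,2,3,\dots\}$. For $A \subseteq \mathbb{N}$ and $x\in\mathbb{R}$, write $A[x] = \{a \in A : a \le x\}$ and $\pi_A(x) = \# A[x]$. $f\sim g$ means $f(x)/g(x)\to 1$ as $x\to\infty$. *)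

From Stdlib Require Import Reals Lra Classical ClassicalEpsilon.
From Coquelicot Require Import Coquelicot.
Open Scope R_scope.

Definition ind (A : nat -> Prop) (n : nat) : R :=
  if excluded_middle_informative (A n) then 1 else 0.

(* floor of x as a natural number (0 for x < 0) *)
Definition nfloor (x : R) : nat := Z.to_nat (Int_part x).

(* sum_{a in A, 1 <= a <= x} f a ; A is a subset of N = {1,2,...}
   (the element 0 is never counted) *)
Definition sumA (A : nat -> Prop) (f : R -> R) (x : R) : R :=
  sum_n_m (fun n => ind A n * f (INR n)) 1 (nfloor x).

Definition piA (A : nat -> Prop) (x : R) : R := sumA A (fun _ => 1) x.

Definition w (lam c x : R) : R :=
  c * (1 - lam) * ln x * exp (c * Rpower x (1 - lam)) / Rpower x lam.

From Pilot Require Import Defs.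
From Stdlib Require Import Reals Lra Lia.
From Coquelicot Require Import Coquelicot.
Open Scope R_scope.

(* Write E(t) = exp(c t^(1-lam)), S(t) = sum_{a in A[t]} w(a),
   h = x^lam and y = x + h.  Three facts combine for large x:
   - w is eventually nondecreasing, so every a in A with x < a <= y has
     w(a) >= w(x), whence  w(x) (pi_A(y) - pi_A(x)) <= S(y) - S(x);
   - concavity of t^(1-lam) gives y^(1-lam) <= x^(1-lam) + (1-lam), hence
     E(y) <= K E(x) with K = exp(c(1-lam));
   - the hypothesis S ~ E gives S(y) < (1+d) E(y) and S(x) > (1-d) E(x).
   Since w(x) = c(1-lam) ln x E(x) / h, dividing by E(x) yields
   c(1-lam) (pi_A(y) - pi_A(x)) / (h / ln x) <= K - 1 + d (K + 1),
   and d is finally chosen in terms of eps. *)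

Lemma exp_le_compat x y : x <= y -> exp x <= exp y.
Proof. intros [Hlt|Heq]; [left; apply exp_increasing; exact Hlt | subst; lra]. Qed.

Lemma nondecreasing_of_derive_nonneg (f df : R -> R) a b : a <= b ->
  (forall t, a <= t <= b -> is_derive f t (df t)) ->
  (forall t, a <= t <= b -> 0 <= df t) -> f a <= f b.
Proof.
intros Hab Hder Hpos.
destruct (MVT_gen f a b df) as [z [Hz Hmvt]];
  rewrite ?Rmin_left, ?Rmax_right in * by lra.
- intros t Ht. apply Hder. lra.
- intros t Ht. apply derivable_continuous_pt. exists (df t).
  apply is_derive_Reals, Hder. lra.
- assert (0 <= df z * (b - a)) by (apply Rmult_le_pos; [apply Hpos; lra | lra]).
  lra.
Qed.

Lemma exp_one_sub_mul_ln l t : 0 < t ->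
  exp ((1 - l) * ln t) = t * exp (- l * ln t).
Proof.
intros Ht. replace ((1 - l) * ln t) with (ln t + - l * ln t) by ring.
rewrite exp_plus, exp_ln; auto.
Qed.

(* Concavity of t^(1-l): moving from x to x + x^l raises the power
   x^(1-l) by at most (1-l) times the length x^l of the step times the
   derivative x^(-l) at x, i.e. by at most 1-l. *)
Lemma Rpower_concave_step l x : 0 < l < 1 -> 0 < x ->
  Rpower (x + Rpower x l) (1 - l) <= Rpower x (1 - l) + (1 - l).
Proof.
intros Hl Hx. unfold Rpower.
(* the tangent line at x minus the power is nondecreasing to the right of x *)
set (g := fun t => (1 - l) * exp (- l * ln x) * t - exp ((1 - l) * ln t)).
assert (Hgap : g x <= g (x + exp (l * ln x))).
{ assert (0 < exp (l * ln x)) by apply exp_pos.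
  apply (nondecreasing_of_derive_nonneg g
           (fun t => (1 - l) * exp (- l * ln x) - (1 - l) * exp (- l * ln t))).
  - lra.
  - intros t Ht. unfold g. auto_derive; [lra |].
    rewrite exp_one_sub_mul_ln by lra. field. lra.
  - intros t Ht.
    assert (exp (- l * ln t) <= exp (- l * ln x)).
    { apply exp_le_compat, Rmult_le_compat_neg_l; [lra | apply ln_le; lra]. }
    nra. }
assert (exp (- l * ln x) * exp (l * ln x) = 1).
{ rewrite <- exp_plus. replace (- l * ln x + l * ln x) with 0 by ring. apply exp_0. }
unfold g in Hgap. nra.
Qed.

(* w is nondecreasing on some half-line [T, +oo) with T >= 2: writing
   w(t) = c(1-l) ln t exp(c t^(1-l) - l ln t), the exponent has derivative
   (c(1-l) t^(1-l) - l)/t, which is nonnegative once t^(1-l) is large. *)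
Lemma w_eventually_nondecreasing l c : 0 < l < 1 -> 0 < c -> exists T, 2 <= T /\
  forall x y, T <= x -> x <= y -> w l c x <= w l c y.
Proof.
intros Hl Hc.
assert (Hcl : 0 < c * (1 - l)) by nra.
set (M := l / (c * (1 - l) * (1 - l))).
exists (Rmax 2 (exp M)). split; [apply Rmax_l |].
set (e := fun t => c * exp ((1 - l) * ln t) - l * ln t).
assert (Hw : forall t, 0 < t -> w l c t = c * (1 - l) * ln t * exp (e t)).
{ intros t Ht. unfold w, Rpower, e.
  assert (Hsplit : exp (c * exp ((1 - l) * ln t) - l * ln t) * exp (l * ln t)
                   = exp (c * exp ((1 - l) * ln t))).
  { rewrite <- exp_plus. f_equal. ring. }
  rewrite <- Hsplit. field. apply Rgt_not_eq, exp_pos. }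
intros x y Hx Hxy.
assert (H2x : 2 <= x) by (eapply Rle_trans; [apply Rmax_l | exact Hx]).
assert (HMx : exp M <= x) by (eapply Rle_trans; [apply Rmax_r | exact Hx]).
assert (He : e x <= e y).
{ apply (nondecreasing_of_derive_nonneg e
           (fun t => (c * (1 - l) * exp ((1 - l) * ln t) - l) / t)); [lra | |].
  - intros t Ht. unfold e. auto_derive; [lra | field; lra].
  - intros t Ht. apply Rmult_le_pos; [| left; apply Rinv_0_lt_compat; lra].
    assert (M <= ln t) by (rewrite <- (ln_exp M); apply ln_le; [apply exp_pos | lra]).
    assert (1 + (1 - l) * ln t <= exp ((1 - l) * ln t)) by apply exp_ineq1_le.
    assert (c * (1 - l) * ((1 - l) * M) = l) by (unfold M; field; lra).
    assert (0 < c * (1 - l) * (1 - l)) by nra.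
    nra. }
rewrite !Hw by lra.
assert (ln x <= ln y) by (apply ln_le; lra).
assert (0 < ln x) by (rewrite <- ln_1; apply ln_increasing; lra).
assert (exp (e x) <= exp (e y)) by (apply exp_le_compat; exact He).
assert (0 < exp (e x)) by apply exp_pos.
apply Rmult_le_compat; nra.
Qed.

Lemma nfloor_le_compat x y : 0 <= x -> x <= y -> (Defs.nfloor x <= Defs.nfloor y)%nat.
Proof.
intros Hx Hxy. unfold Defs.nfloor.
destruct (base_Int_part x) as [Hx1 Hx2]. destruct (base_Int_part y) as [Hy1 Hy2].
assert (Hlt : IZR (Int_part x) < IZR (Int_part y) + 1) by lra.
rewrite <- plus_IZR in Hlt. apply lt_IZR in Hlt. lia.
Qed.

Lemma lt_of_nfloor_lt x n : 0 <= x -> (Defs.nfloor x < n)%nat -> x < INR n.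
Proof.
intros Hx Hn. unfold Defs.nfloor in Hn.
destruct (base_Int_part x) as [Hx1 Hx2].
assert (Hnonneg : (-1 < Int_part x)%Z) by (apply lt_IZR; lra).
assert (IZR (Int_part x + 1) <= IZR (Z.of_nat n)) by (apply IZR_le; lia).
rewrite INR_IZR_INZ. rewrite plus_IZR in *. lra.
Qed.

Lemma sum_n_m_le_loc (a b : nat -> R) n m :
  (forall k, (n <= k <= m)%nat -> a k <= b k) -> sum_n_m a n m <= sum_n_m b n m.
Proof.
intros Hab.
rewrite (sum_n_m_ext_loc b (fun k => Rmax (a k) (b k)) n m).
- apply sum_n_m_le. intros k. apply Rmax_l.
- intros k Hk. symmetry. apply Rmax_right, Hab, Hk.
Qed.

Lemma sumA_sub A f x y : 0 <= x -> x <= y ->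
  sumA A f y - sumA A f x
  = sum_n_m (fun n => Defs.ind A n * f (INR n)) (S (Defs.nfloor x)) (Defs.nfloor y).
Proof.
intros Hx Hxy. unfold sumA.
rewrite (sum_n_m_Chasles _ 1 (Defs.nfloor x) (Defs.nfloor y)) by (try lia; apply nfloor_le_compat; auto).
unfold plus; simpl. ring.
Qed.

Lemma sumA_window_lower_bound A f x y : 0 <= x -> x <= y ->
  (forall n : nat, x < INR n -> f x <= f (INR n)) ->
  f x * (piA A y - piA A x) <= sumA A f y - sumA A f x.
Proof.
intros Hx Hxy Hf. unfold piA. rewrite !sumA_sub by auto. cbv beta.
assert (Hscal := sum_n_m_mult_l (K := R_Ring) (f x) (fun n => Defs.ind A n * 1)
                   (S (Defs.nfloor x)) (Defs.nfloor y)).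
unfold mult in Hscal; simpl in Hscal.
eapply Rle_trans; [right; symmetry; exact Hscal |].
apply sum_n_m_le_loc. intros k Hk.
assert (0 <= Defs.ind A k) by (unfold Defs.ind; destruct ClassicalEpsilon.excluded_middle_informative; lra).
assert (f x <= f (INR k)) by (apply Hf, lt_of_nfloor_lt; [exact Hx | lia]).
nra.
Qed.

Lemma eventually_ratio_bounds (f g : R -> R) d : 0 < d -> (forall t, 0 < g t) ->
  is_lim (fun t => f t / g t) p_infty 1 ->
  exists M, forall t, M < t -> (1 - d) * g t < f t < (1 + d) * g t.
Proof.
intros Hd Hg Hlim. apply is_lim_spec in Hlim.
destruct (Hlim (mkposreal d Hd)) as [M HM]. exists M. intros t Ht.
specialize (HM t Ht). simpl in HM. apply Rabs_def2 in HM.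
assert (Hratio : f t = f t / g t * g t) by (field; apply Rgt_not_eq, Hg).
specialize (Hg t). rewrite Hratio. split; nra.
Qed.

Lemma window_bound_at lam c A d x : 0 < lam < 1 -> 0 < c -> 0 < d -> 1 < x ->
  (forall t, x <= t -> w lam c x <= w lam c t) ->
  (1 - d) * exp (c * Rpower x (1 - lam)) < sumA A (w lam c) x ->
  sumA A (w lam c) (x + Rpower x lam)
    < (1 + d) * exp (c * Rpower (x + Rpower x lam) (1 - lam)) ->
  c * (1 - lam) * ((piA A (x + Rpower x lam) - piA A x) / (Rpower x lam / ln x))
  <= exp (c * (1 - lam)) - 1 + d * (exp (c * (1 - lam)) + 1).
Proof.
intros Hl Hc Hd Hx Hmono Hlow Hup.
set (h := Rpower x lam) in *. set (y := x + h) in *.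
set (Ex := exp (c * Rpower x (1 - lam))) in *.
set (K := exp (c * (1 - lam))).
set (P := piA A y - piA A x).
assert (Hh : 0 < h) by apply exp_pos.
assert (HEx : 0 < Ex) by apply exp_pos.
assert (Hlnx : 0 < ln x) by (rewrite <- ln_1; apply ln_increasing; lra).
assert (Hcl : 0 < c * (1 - lam)) by nra.
assert (Hgrowth : exp (c * Rpower y (1 - lam)) <= Ex * K).
{ unfold Ex, K. rewrite <- exp_plus. apply exp_le_compat.
  pose proof (Rpower_concave_step lam x Hl ltac:(lra)) as Hconc.
  fold h y in Hconc. nra. }
assert (Hcount : w lam c x * P <= sumA A (w lam c) y - sumA A (w lam c) x).
{ apply sumA_window_lower_bound; unfold y; try lra.
  intros n Hn. apply Hmono. lra. }
assert (Hwx : w lam c x = c * (1 - lam) * (ln x / h) * Ex) by (unfold w; fold h Ex; field; lra).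
rewrite Hwx in Hcount.
assert (Hscaled : c * (1 - lam) * (P / (h / ln x)) * Ex <= (K - 1 + d * (K + 1)) * Ex).
{ replace (P / (h / ln x)) with (ln x / h * P) by (field; lra).
  assert ((1 + d) * exp (c * Rpower y (1 - lam)) <= (1 + d) * (Ex * K))
    by (apply Rmult_le_compat_l; lra).
  lra. }
apply Rmult_le_reg_r in Hscaled; [exact Hscaled | exact HEx].
Qed.

Theorem mainTheorem4 (lam c : R) (A : nat -> Prop) :
  0 < lam < 1 -> 0 < c ->
  is_lim (fun x => sumA A (w lam c) x / exp (c * Rpower x (1 - lam)))
         p_infty 1 ->
  forall eps : R, 0 < eps ->
    exists X : R, forall x : R, X <= x ->
      (piA A (x + Rpower x lam) - piA A x) / (Rpower x lam / ln x)
      <= (exp (c * (1 - lam)) - 1) / (c * (1 - lam)) + eps.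
Proof.
intros Hl Hc Hlim eps Heps.
set (K := exp (c * (1 - lam))).
assert (HK : 0 < K) by apply exp_pos.
assert (Hcl : 0 < c * (1 - lam)) by nra.
set (d := eps * (c * (1 - lam)) / (K + 1)).
assert (Hd : 0 < d) by (unfold d; apply Rdiv_lt_0_compat; nra).
destruct (eventually_ratio_bounds _ _ d Hd (fun t => exp_pos _) Hlim) as [M HM].
destruct (w_eventually_nondecreasing lam c Hl Hc) as [T [HT2 HT]].
exists (Rmax (Rabs M + 1) T). intros x Hx.
assert (HxT : T <= x) by (eapply Rle_trans; [apply Rmax_r | exact Hx]).
assert (HxM : Rabs M + 1 <= x) by (eapply Rle_trans; [apply Rmax_l | exact Hx]).
pose proof (Rle_abs M) as HMabs.
assert (Hh : 0 < Rpower x lam) by apply exp_pos.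
assert (Hbound := window_bound_at lam c A d x Hl Hc Hd ltac:(lra)
  (fun t Ht => HT x t HxT Ht) (proj1 (HM x ltac:(lra)))
  (proj2 (HM (x + Rpower x lam) ltac:(lra)))).
fold K in Hbound.
assert (Hdchoice : d * (K + 1) = eps * (c * (1 - lam))) by (unfold d; field; lra).
apply (Rmult_le_reg_l (c * (1 - lam))); [exact Hcl |].
replace (c * (1 - lam) * ((K - 1) / (c * (1 - lam)) + eps))
  with (K - 1 + eps * (c * (1 - lam))) by (field; lra).
lra.
Qed.
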